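(* Assume Assumption 1, Assumption 2 and the null hypothesis $H_0:\ T_i(1)=T_i(0)$ for all $i$, and condition on $\boldsymbol{T}(1),\boldsymbol{T}(0)$. Then for any time $t\ge 0$ and integers $A,B$, $$\Pr\{\overline{D}_1(t)=A,\overline{N}_1(t)=B\mid\boldsymbol{T}(1),\boldsymbol{T}(0),\Delta_i\mathbb{1}(W_i=t),\mathbb{1}(W_i\ge t),1\le i\le n\}=\binom{\overline{D}(t)}{A}\binom{\overline{N}(t)-\overline{D}(t)}{B-A}\{\phi(t)\}^B\{1-\phi(t)\}^{\overline{N}(t)-B}.$$
   Context: There are $n$ units. Unit $i$ has potential event times $T_i(1),T_i(0)\ge 0$, potential censoring times $C_i(1),C_i(0)\in[0,\infty]$, and treatment indicator $Z_i\in\{0,1\}$; bold letters denote $n$-vectors. Assumption 1: conditional on $\boldsymbol{T}(1),\boldsymbol{T}(0),\boldsymbol{C}(1),\boldsymbol{C}(0)$, the $Z_i$ are i.i.d. Bernoulli$(p_1)$, $p_1=1-p_0\in(0,1)$. Assumption 2: $(\boldsymbol{C}(1),\boldsymbol{C}(0))$ is independent of $(\boldsymbol{T}(1),\boldsymbol{T}(0))$ and the pairs $(C_i(1),C_i(0))$ are i.i.d. across $i$. $G_z(c)=\Pr(C_i(z)\ge c)$, $\phi(t)=p_1G_1(t)/\{p_1G_1(t)+p_0G_0(t)\}$. Realized: $T_i=Z_iT_i(1)+(1-Z_i)T_i(0)$, $C_i=Z_iC_i(1)+(1-Z_i)C_i(0)$, $W_i=\min\{T_i,C_i\}$, $\Delta_i=\mathbb{1}(T_i\le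 C_i)$. $\overline{N}_1(t)=\sum_iZ_i\mathbb{1}(W_i\ge t)$, $\overline{N}(t)=\sum_i\mathbb{1}(W_i\ge t)$, $\overline{D}_1(t)=\sum_iZ_i\Delta_i\mathbb{1}(W_i=t)$, $\overline{D}(t)=\sum_i\Delta_i\mathbb{1}(W_i=t)$. Binomial coefficients $\binom{a}{b}$ are $0$ when $b<0$ or $b>a$. *)

From HB Require Import structures.
From mathcomp Require Import all_boot all_order all_algebra.
From mathcomp Require Import all_classical all_reals all_analysis measurable_realfun.
Set Implicit Arguments. Unset Strict Implicit. Unset Printing Implicit Defensive.
Import Order.TTheory GRing.Theory Num.Theory.
Local Open Scope classical_set_scope.
Local Open Scope ring_scope.

Definition binz {R : nzRingType} (a : nat) (b : int) : R :=
  match b with Posz k => ('C(a, k))%:R | Negz _ => 0 end.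

Definition mutual_indep {d} {Om : measurableType d} {R : realType}
  (P : probability Om R) {I : finType} (F : I -> set (set Om)) : Prop :=
  forall (J : {set I}) (E : I -> set Om), (forall i, i \in J -> F i (E i)) ->
    P (\big[setI/setT]_(i in J) E i) = (\prod_(i in J) P (E i))%E.

Definition preimg_class {d d'} {Om : measurableType d} {T : measurableType d'}
  (X : Om -> T) : set (set Om) := [set X @^-1` B | B in measurable].

Definition Cpair {Om : Type} {R : realType} {n : nat} (C1 C0 : 'I_n -> Om -> \bar R)
  (i : 'I_n) (w : Om) : \bar R * \bar R := (C1 i w, C0 i w).

Definition unit_classes {d} {Om : measurableType d} {R : realType} {n : nat}
  (Z : 'I_n -> Om -> bool) (C1 C0 : 'I_n -> Om -> \bar R) (k : 'I_n + 'I_n)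
  : set (set Om) :=
  match k with
  | inl i => preimg_class (Z i)
  | inr i => preimg_class (Cpair C1 C0 i)
  end.

Section Observables.
Context {Om : Type} {R : realType} {n : nat}.
Variables (T1 T0 : 'I_n -> R) (Z : 'I_n -> Om -> bool) (C1 C0 : 'I_n -> Om -> \bar R).

Definition Tobs (i : 'I_n) (w : Om) : R := if Z i w then T1 i else T0 i.
Definition Cobs (i : 'I_n) (w : Om) : \bar R := if Z i w then C1 i w else C0 i w.
Definition Wobs (i : 'I_n) (w : Om) : \bar R := Order.min (Tobs i w)%:E (Cobs i w).
Definition Deltaobs (i : 'I_n) (w : Om) : bool := ((Tobs i w)%:E <= Cobs i w)%E.

Definition obs (t : R) (i : 'I_n) (w : Om) : bool * bool :=
  (Deltaobs i w && (Wobs i w == t%:E), (t%:E <= Wobs i w)%E).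

Definition D1bar (t : R) (w : Om) : nat := \sum_(i < n) (Z i w && (obs t i w).1).
Definition N1bar (t : R) (w : Om) : nat := \sum_(i < n) (Z i w && (obs t i w).2).
Definition Dbar (t : R) (w : Om) : nat := \sum_(i < n) (obs t i w).1.
Definition Nbar (t : R) (w : Om) : nat := \sum_(i < n) (obs t i w).2.
End Observables.

Definition phi {R : realType} (p1 : R) (G1 G0 : R -> R) (t : R) : R :=
  p1 * G1 t / (p1 * G1 t + (1 - p1) * G0 t).

From HB Require Import structures.
From mathcomp Require Import all_boot all_order all_algebra.
From mathcomp Require Import all_classical all_reals all_analysis measurable_realfun.
From mathcomp Require Import ring zify.
Import Order.TTheory GRing.Theory Num.Theory.
Local Open Scope classical_set_scope.
Local Open Scope ring_scope.

Set Implicit Arguments. Unset Strict Implicit. Unset Printing Implicit Defensive.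

(* Under H0 the observation (Delta_i 1(W_i = t), 1(W_i >= t)) of unit i is
   (1(T_i = t) 1(C >= t), 1(T_i >= t) 1(C >= t)) with C = C_i(Z_i).  On the
   conditioning event, {Z = z} is therefore the intersection over i of
   {Z_i = z_i} and {C_i(z_i) in S_i}, where S_i is the set of censoring times
   compatible with the observed pattern of unit i, and by independence its
   probability is a product of unit weights a_i(z_i).  For a unit at risk at
   t, S_i = [t, +oo], so a_i(1) = p1 G1(t) and a_i(0) = (1 - p1) G0(t) do not
   depend on i.
   Summing over the z with prescribed counts among the units with an event and
   among the other units at risk produces two binomial terms, and the weights
   of the units not at risk cancel in the conditional probability. *)

Definition fcons n (b : bool) (g : {ffun 'I_n -> bool}) : {ffun 'I_n.+1 -> bool} :=
  [ffun i => if unlift ord0 i is Some j then g j else b].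

Lemma fcons0 n b (g : {ffun 'I_n -> bool}) : fcons b g ord0 = b.
Proof. by rewrite ffunE unlift_none. Qed.

Lemma fconsS n b (g : {ffun 'I_n -> bool}) j : fcons b g (lift ord0 j) = g j.
Proof. by rewrite ffunE liftK. Qed.

Lemma big_fcons (T : Type) (idx : T) (op : T -> T -> T) n (F : 'I_n.+1 -> bool -> T) b g :
  \big[op/idx]_(i < n.+1) F i (fcons b g i)
  = op (F ord0 b) (\big[op/idx]_(i < n) F (lift ord0 i) (g i)).
Proof.
by rewrite big_ord_recl fcons0; congr op; apply: eq_bigr => j _; rewrite fconsS.
Qed.

Lemma big_ffunS (V : nmodType) n (P : pred {ffun 'I_n.+1 -> bool})
    (F : {ffun 'I_n.+1 -> bool} -> V) :
  \sum_(f | P f) F f = \sum_(b : bool) \sum_(g | P (fcons b g)) F (fcons b g).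
Proof.
rewrite pair_big_dep /= (reindex (fun p : bool * {ffun 'I_n -> bool} => fcons p.1 p.2)) //=.
exists (fun f : {ffun 'I_n.+1 -> bool} => (f ord0, [ffun j => f (lift ord0 j)]))
  => [[b g] _ | f _] /=.
  by rewrite fcons0; congr pair; apply/ffunP => j; rewrite ffunE fconsS.
by apply/ffunP => i; rewrite ffunE; case: unliftP => [j ->|->]; rewrite ?ffunE.
Qed.

Lemma big_count_succl (V : nmodType) (I : finType) (x : I -> nat) (Q : pred I)
    (F : I -> V) k :
  \sum_(i | ((x i).+1 == k) && Q i) F i
  = if k is k'.+1 then \sum_(i | (x i == k') && Q i) F i else 0.
Proof. by case: k => [|k]; [rewrite big_pred0 | apply: eq_bigl => i; rewrite eqSS]. Qed.

Lemma big_count_succr (V : nmodType) (I : finType) (x : I -> nat) (Q : pred I)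
    (F : I -> V) k :
  \sum_(i | Q i && ((x i).+1 == k)) F i
  = if k is k'.+1 then \sum_(i | Q i && (x i == k')) F i else 0.
Proof.
by case: k => [|k]; [rewrite big_pred0 // => i; rewrite andbF | apply: eq_bigl => i; rewrite eqSS].
Qed.

Section BinomialWeights.
Variables (R : comNzRingType) (r0 r1 : R).

Definition binom_term (m k : nat) : R := 'C(m, k)%:R * r1 ^+ k * r0 ^+ (m - k).

Lemma binom_term0n k : binom_term 0 k = (k == 0)%:R.
Proof. by case: k => [|k]; rewrite /binom_term ?bin0 ?bin_small ?subnn ?expr0 ?mul0r ?mulr1. Qed.

Lemma binom_termS m k :
  binom_term m.+1 k = r0 * binom_term m k + (if k is k'.+1 then r1 * binom_term m k' else 0).
Proof.
case: k => [|k]; first by rewrite /binom_term !bin0 !subn0 exprS addr0; ring.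
rewrite /binom_term binS natrD subSS.
case: (ltnP k m) => [lt_km | le_mk].
  by rewrite -(subnSK lt_km) !exprS; ring.
by rewrite (@bin_small m k.+1) ?ltnS // exprS; ring.
Qed.

Lemma sum_prod_two_counts n (a : 'I_n -> bool -> R) (d m : pred 'I_n) :
    (forall i, ~~ (d i && m i)) ->
    (forall i, d i || m i -> a i false = r0 /\ a i true = r1) ->
  forall k c,
  \sum_(z : {ffun 'I_n -> bool} |
         ((\sum_i (z i && d i))%N == k) && ((\sum_i (z i && m i))%N == c))
    \prod_i a i (z i)
  = binom_term (\sum_i d i) k * binom_term (\sum_i m i) c
    * \prod_(i | ~~ (d i || m i)) (a i false + a i true).
Proof.
elim: n a d m => [|n IH] a d m dm_disj a_dm k c.
  rewrite !big_ord0 !binom_term0n mulr1 (eq_bigr (fun=> 1)) => [|z _]; last exact: big_ord0.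
  under eq_bigl do rewrite !big_ord0.
  case: k c => [|k] [|c] /=; rewrite ?big_pred0_eq ?mul0r ?mulr0 //.
  by rewrite (eq_bigl xpredT) // sumr_const card_ffun card_ord mulr1.
have count_fcons (q : pred 'I_n.+1) b g : (\sum_i (fcons b g i && q i) =
    (b && q ord0) + \sum_i (g i && q (lift ord0 i)))%N.
  exact: (big_fcons 0%N addn (fun i b => b && q i)).
have prod_fcons b g : \prod_i a i (fcons b g i) = a ord0 b * \prod_i a (lift ord0 i) (g i).
  exact: (big_fcons _ _ a).
rewrite big_ffunS big_bool /=.
under eq_bigl do rewrite !count_fcons.
under [in X in _ + X]eq_bigl do rewrite !count_fcons.
under eq_bigr do rewrite prod_fcons.
under [in X in _ + X]eq_bigr do rewrite prod_fcons.
rewrite -!big_distrr /= !big_ord_recl (big_mkcond (fun i => ~~ (d i || m i))).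
rewrite big_ord_recl -(big_mkcond (fun i => ~~ (d (lift ord0 i) || m (lift ord0 i)))) /=.
have IHn := IH (fun i => a (lift ord0 i)) (fun i => d (lift ord0 i))
  (fun i => m (lift ord0 i)) (fun i => dm_disj (lift ord0 i)) (fun i => a_dm (lift ord0 i)).
have := dm_disj ord0; have := a_dm ord0.
case: (d ord0); case: (m ord0) => //= a0 _; rewrite ?mul1r ?add0n ?add1n.
all: under eq_bigl do rewrite ?add0n ?add1n.
all: under [X in _ + _ * X]eq_bigl do rewrite ?add0n.
- have [-> ->] := a0 isT.
  by rewrite big_count_succl binom_termS; case: k => [|k]; rewrite !IHn; ring.
- have [-> ->] := a0 isT.
  by rewrite big_count_succr binom_termS; case: c => [|c]; rewrite !IHn; ring.
- by rewrite !IHn; ring.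
Qed.

End BinomialWeights.

Lemma binz_neg (R : nzRingType) m (z : int) : z < 0 -> binz m z = 0 :> R.
Proof. by case: z. Qed.

Section BinomialRatio.
Variables (F : fieldType) (r0 r1 : F).
Let phi := r1 / (r1 + r0).

Lemma binom_term_ratio D M a c : (r1 + r0) ^+ (D + M) != 0 ->
  binom_term r0 r1 D a * binom_term r0 r1 M c / (r1 + r0) ^+ (D + M)
  = 'C(D, a)%:R * 'C(M, c)%:R * phi ^+ (a + c) * (1 - phi) ^ ((D + M)%:Z - (a + c)%:Z).
Proof.
move=> s_neq0; rewrite /binom_term.
have [aD|Da] := leqP a D; last by rewrite bin_small // !mul0r.
have [cM|Mc] := leqP c M; last by rewrite (bin_small Mc) !(mul0r, mulr0).
rewrite subzn; last by rewrite leq_add.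
have [DM0|DM_gt0] := posnP (D + M).
  have [D0 M0] : D = 0%N /\ M = 0%N by lia.
  move: aD cM; rewrite D0 M0 !leqn0 => /eqP-> /eqP->.
  by rewrite !bin0 subnn -exprnP !expr0 !mulr1 divr1.
have s_neq0' : r1 + r0 != 0 by apply: contraNneq s_neq0 => ->; rewrite expr0n gtn_eqF.
have -> : 1 - phi = r0 / (r1 + r0) by rewrite /phi; field.
rewrite /phi -exprnP !expr_div_n.
have -> : (D + M - (a + c) = (D - a) + (M - c))%N by lia.
have -> : (D + M = (a + c) + ((D - a) + (M - c)))%N by lia.
by rewrite !exprD; field; rewrite !expf_neq0.
Qed.

Lemma nested_counts_ratio n (a : 'I_n -> bool -> F) (d u : pred 'I_n) (A B : int) :
    (forall i, d i -> u i) -> (forall i, u i -> a i false = r0 /\ a i true = r1) ->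
    \prod_i (a i false + a i true) != 0 ->
  (\sum_(z : {ffun 'I_n -> bool} |
          ((\sum_i (z i && d i))%:Z == A) && ((\sum_i (z i && u i))%:Z == B))
     \prod_i a i (z i)) / \prod_i (a i false + a i true)
  = binz (\sum_i d i) A * binz (\sum_i u i - \sum_i d i) (B - A)
    * phi ^ B * (1 - phi) ^ ((\sum_i u i)%:Z - B).
Proof.
move=> du a_u prod_neq0.
have count_split (z : 'I_n -> bool) : (\sum_i (z i && u i)
    = \sum_i (z i && d i) + \sum_i (z i && (u i && ~~ d i)))%N.
  rewrite -big_split; apply: eq_bigr => i _; have := du i.
  by case: (z i); case: (d i); case: (u i) => // /(_ isT).
set D := (\sum_i d i)%N; set M := (\sum_i (u i && ~~ d i))%N.
have N_split : (\sum_i u i = D + M)%N := count_split (fun=> true).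
set K := \prod_(i | ~~ u i) (a i false + a i true).
have prod_split : \prod_i (a i false + a i true) = (r1 + r0) ^+ (D + M) * K.
  rewrite (bigID u) /= -N_split -prodrXr big_mkcond /=; congr (_ * _).
  by apply: eq_bigr => i _; case: (boolP (u i)) => // /a_u[-> ->]; rewrite addrC.
move: prod_neq0; rewrite prod_split mulf_eq0 negb_or => /andP[s_neq0 K_neq0].
case: A => [a0|a0]; last by rewrite big1 ?mul0r // => z /andP[].
case: B => [b0|b0]; last first.
  by rewrite big1 => [|z /andP[]//]; rewrite mul0r [binz _ (_ - _)]binz_neg ?mulr0 ?mul0r.
have [ab|ba] := leqP a0 b0; last first.
  rewrite big1 => [|z /andP[/eqP cd /eqP cu]]; last first.
    by move: cu; rewrite count_split PoszD cd; lia.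
  by rewrite mul0r [binz _ (_ - _)]binz_neg ?mulr0 ?mul0r //; lia.
have cond_split (z : {ffun 'I_n -> bool}) :
    ((\sum_i (z i && d i))%:Z == a0) && ((\sum_i (z i && u i))%:Z == b0)
    = ((\sum_i (z i && d i))%N == a0)
      && ((\sum_i (z i && (u i && ~~ d i)))%N == b0 - a0)%N.
  by rewrite count_split; apply/andP/andP => -[/eqP h1 /eqP h2]; split; apply/eqP; lia.
rewrite (eq_bigl _ _ cond_split) (sum_prod_two_counts (r0 := r0) (r1 := r1)); first last.
- by move=> i du_i; apply: a_u; case/orP: du_i => [/du | /andP[]].
- by move=> i; rewrite andbCA andbN andbF.
have -> : \prod_(i | ~~ (d i || u i && ~~ d i)) (a i false + a i true) = K.
  by apply: eq_bigl => i; have := du i; case: (d i); case: (u i) => //= /(_ isT).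
by rewrite invfM mulrACA -/K mulfV // mulr1 binom_term_ratio // subnKC // N_split addKn (subzn ab).
Qed.

End BinomialRatio.

Section ObservationPattern.
Variable R : realType.

Definition obs_of (t T : R) (c : \bar R) : bool * bool :=
  ((T == t) && (t%:E <= c)%E, (t <= T) && (t%:E <= c)%E).

Lemma obsE n (T1 T0 : 'I_n -> R) Om (Z : 'I_n -> Om -> bool) C1 C0 t i w :
  obs T1 T0 Z C1 C0 t i w = obs_of t (Tobs T1 T0 Z i w) (Cobs Z C1 C0 i w).
Proof.
rewrite /obs /Deltaobs /Wobs /obs_of le_min lee_fin minEle.
set T := Tobs T1 T0 Z i w; set c := Cobs Z C1 C0 i w.
case: ifPn => Tc; first by rewrite eqe; congr pair; case: eqP => [<-|] //=; rewrite Tc.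
congr pair; case: (T =P t) => [Tt|] //=; rewrite Tt in Tc.
exact/esym/negbTE.
Qed.

Lemma measurable_obs_of t T y : measurable [set c : \bar R | obs_of t T c = y].
Proof.
have mle := measurable_fun_lee (measurable_cst t%:E) (@measurable_id _ (\bar R) setT).
rewrite -[X in measurable X]setTI.
exact: (mle measurableT [set b | ((T == t) && b, (t <= T) && b) = y]).
Qed.

Lemma obs_of_at_risk t T c y : obs_of t T c = y ->
  (y.1 -> y.2) /\ (y.2 -> [set c' | obs_of t T c' = y] = [set c' | (t%:E <= c')%E]).
Proof.
move=> <-; rewrite /obs_of /=; split=> [/andP[/eqP-> ->] | /andP[tT tc]].
  by rewrite lexx.
apply/seteqP; split=> [c' [_] | c' /= tc'].
  by rewrite tT tc /= => ->.
by rewrite tc tc'.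
Qed.

End ObservationPattern.

Lemma bigsetI_forall (T : Type) (I : finType) (E : I -> set T) :
  \big[setI/setT]_(k in [set: I]%SET) E k = [set w | forall k, E k w].
Proof.
apply/seteqP; split => [w + k|w Ew]; first by rewrite (bigD1 k) ?in_setT // => -[].
by elim/big_ind: _ => // X Y Xw Yw; split.
Qed.

Lemma measurable_forall d (T : measurableType d) (I : finType) (E : I -> set T) :
  (forall k, measurable (E k)) -> measurable [set w | forall k, E k w].
Proof. by move=> mE; rewrite -bigsetI_forall; apply: bigsetI_measurable. Qed.

Lemma measure_fibres d (T : ringOfSetsType d) (R : realFieldType)
    (mu : {content set T -> \bar R}) (I : finType) (X : T -> I) (E : set T) (Q : pred I) :
    (forall i, measurable (E `&` X @^-1` [set i])) ->
  mu (E `&` X @^-1` [set i | Q i]) = (\sum_(i | Q i) mu (E `&` X @^-1` [set i]))%E.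
Proof.
move=> mEX.
have -> : E `&` X @^-1` [set i | Q i] = \bigcup_(i in [set` Q]) (E `&` X @^-1` [set i]).
  by apply/seteqP; split => [w [Ew Qw]|w [i Qi [Ew /= ->]]] //; exists (X w).
rewrite measure_fin_bigcup // => [|i j _ _ [w [[_ Xi] [_ Xj]]]]; last by rewrite -Xi -Xj.
rewrite -(@bigfs _ _ _ _ (index_enum I)) ?index_enum_uniq // => i _.
by rewrite mem_index_enum.
Qed.

Lemma prob_unit_events d (Om : measurableType d) (R : realType) (P : probability Om R)
    n (Z : 'I_n -> Om -> bool) (C1 C0 : 'I_n -> Om -> \bar R)
    (BZ : 'I_n -> set bool) (BC : 'I_n -> set (\bar R * \bar R)) :
    mutual_indep P (unit_classes Z C1 C0) -> (forall i, measurable (BC i)) ->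
  P [set w | forall i, BZ i (Z i w) /\ BC i (Cpair C1 C0 i w)]
  = (\prod_i (P (Z i @^-1` BZ i) * P (Cpair C1 C0 i @^-1` BC i)))%E.
Proof.
move=> indep mBC.
pose E k := match k with
  | inl i => Z i @^-1` BZ i | inr i => Cpair C1 C0 i @^-1` BC i end.
have -> : [set w | forall i, BZ i (Z i w) /\ BC i (Cpair C1 C0 i w)]
    = \big[setI/setT]_(k in [set: 'I_n + 'I_n]%SET) E k.
  rewrite bigsetI_forall; apply/seteqP; split=> [w Ew [] i | w Ew i]; first 2 last.
  - exact: conj (Ew (inl i)) (Ew (inr i)).
  - exact: (Ew i).1.
  - exact: (Ew i).2.
rewrite indep => [|[] i _]; last 2 first.
- by exists (BZ i).
- by exists (BC i).
rewrite (eq_bigl xpredT) => [|k]; last by rewrite finset.in_setT.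
by rewrite big_sumType big_split.
Qed.

Section NullModel.
Variables (R : realType) (d : measure_display) (Om : measurableType d)
  (P : probability Om R) (n : nat) (p1 : R) (G1 G0 : R -> R)
  (T1 T0 : 'I_n -> R) (Z : 'I_n -> Om -> bool) (C1 C0 : 'I_n -> Om -> \bar R).
Hypotheses (mZ : forall i, measurable_fun setT (Z i))
  (mC1 : forall i, measurable_fun setT (C1 i))
  (mC0 : forall i, measurable_fun setT (C0 i))
  (indep : mutual_indep P (unit_classes Z C1 C0))
  (PZ : forall i, P [set w | Z i w] = p1%:E)
  (PC1 : forall i (c : R), P [set w | (c%:E <= C1 i w)%E] = (G1 c)%:E)
  (PC0 : forall i (c : R), P [set w | (c%:E <= C0 i w)%E] = (G0 c)%:E)
  (null : forall i, T1 i = T0 i).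
Variables (t : R) (x : {ffun 'I_n -> bool * bool}).

Let Ecnd := [set w | forall i, obs T1 T0 Z C1 C0 t i w = x i].
Let Zv w : {ffun 'I_n -> bool} := [ffun i => Z i w].

Definition fibre_event (z : {ffun 'I_n -> bool}) : set Om :=
  [set w | forall i, Z i w = z i /\ obs_of t (T1 i) (if z i then C1 i w else C0 i w) = x i].

Definition cond_weight i (b : bool) : R :=
  fine (P (Z i @^-1` [set b]))
  * fine (P [set w | obs_of t (T1 i) (if b then C1 i w else C0 i w) = x i]).

Lemma measurable_Z_event i (b : bool) : measurable (Z i @^-1` [set b]).
Proof. by rewrite -[X in measurable X]setTI; exact: (mZ i measurableT (Y := [set b])). Qed.

Lemma obs_null i w : obs T1 T0 Z C1 C0 t i w
  = obs_of t (T1 i) (if Z i w then C1 i w else C0 i w).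
Proof. by rewrite obsE /Tobs /Cobs -null; case: (Z i w). Qed.

Lemma cond_fibreE z : Ecnd `&` Zv @^-1` [set z] = fibre_event z.
Proof.
apply/seteqP; split=> [w [Ew /= <-] i | w Ew].
  by rewrite ffunE -obs_null.
split=> [i|]; first by rewrite obs_null (Ew i).1; exact: (Ew i).2.
by apply/ffunP => i; rewrite ffunE (Ew i).1.
Qed.

Lemma measurable_obs_event i (b : bool) :
  measurable [set w | obs_of t (T1 i) (if b then C1 i w else C0 i w) = x i].
Proof.
rewrite -[X in measurable X]setTI.
have mS := measurable_obs_of t (T1 i) (x i).
by case: b; [exact: (mC1 i measurableT mS) | exact: (mC0 i measurableT mS)].
Qed.

Lemma measurable_fibre_event z : measurable (fibre_event z).
Proof.
by apply: measurable_forall => i; apply: measurableI;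
  [exact: measurable_Z_event | exact: measurable_obs_event].
Qed.

Lemma prob_fibre_event z : P (fibre_event z) = (\prod_i cond_weight i (z i))%:E.
Proof.
have fineP A : measurable A -> P A = (fine (P A))%:E.
  by move=> mA; rewrite fineK ?fin_num_measure.
rewrite /fibre_event (prob_unit_events (fun i => [set z i])
  (BC := fun i => [set p | obs_of t (T1 i) (if z i then p.1 else p.2) = x i]) indep).
  rewrite -prodEFin; apply: eq_bigr => i _.
  rewrite EFinM /cond_weight -!fineP //.
    exact: measurable_obs_event.
  exact: measurable_Z_event.
move=> i; rewrite -[X in measurable X]setTI.
have mS := measurable_obs_of t (T1 i) (x i).
by case: (z i);
  [exact: (measurable_fst measurableT _ mS) | exact: (measurable_snd measurableT _ mS)].
Qed.

Lemma prob_cond_fibres (Q : pred {ffun 'I_n -> bool}) :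
  P (Ecnd `&` Zv @^-1` [set z | Q z])
  = (\sum_(z | Q z) \prod_i cond_weight i (z i))%:E.
Proof.
rewrite measure_fibres => [|z]; last by rewrite cond_fibreE; apply: measurable_fibre_event.
rewrite -sumEFin; apply: eq_bigr => z _; rewrite cond_fibreE.
exact: prob_fibre_event.
Qed.

Lemma prob_cond : P Ecnd = (\prod_i (cond_weight i false + cond_weight i true))%:E.
Proof.
have -> : Ecnd = Ecnd `&` Zv @^-1` [set z | xpredT z] by rewrite setIidl.
rewrite prob_cond_fibres.
by rewrite -bigA_distr_bigA; congr (_%:E); apply: eq_bigr => i _; rewrite big_bool addrC.
Qed.

Lemma prob_joint_cond (A B : int) :
  P ([set w | (D1bar T1 T0 Z C1 C0 t w)%:Z = A /\ (N1bar T1 T0 Z C1 C0 t w)%:Z = B]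
     `&` Ecnd)
  = (\sum_(z : {ffun 'I_n -> bool} |
            ((\sum_i (z i && (x i).1))%:Z == A) && ((\sum_i (z i && (x i).2))%:Z == B))
       \prod_i cond_weight i (z i))%:E.
Proof.
rewrite -prob_cond_fibres setIC; congr (P _); apply/seteqP.
have counts w : Ecnd w -> D1bar T1 T0 Z C1 C0 t w = (\sum_i (Zv w i && (x i).1))%N
                       /\ N1bar T1 T0 Z C1 C0 t w = (\sum_i (Zv w i && (x i).2))%N.
  by move=> Ew; split; apply: eq_bigr => i _; rewrite ffunE (Ew i).
split=> w [Ew] /=; have [-> ->] := counts w Ew.
  by case=> <- <-; rewrite !eqxx.
by case/andP=> /eqP-> /eqP->.
Qed.

Lemma cond_obs_of w i : Ecnd w -> exists c, obs_of t (T1 i) c = x i.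
Proof. by move=> /(_ i); rewrite obs_null; eexists; eassumption. Qed.

Lemma cond_event_at_risk w i : Ecnd w -> (x i).1 -> (x i).2.
Proof. by case/(cond_obs_of i) => c /obs_of_at_risk[]. Qed.

Lemma cond_weight_at_risk w i : Ecnd w -> (x i).2 ->
  cond_weight i false = (1 - p1) * G0 t /\ cond_weight i true = p1 * G1 t.
Proof.
case/(cond_obs_of i) => c /obs_of_at_risk[_ /[apply] riskE].
have risk_event (C : Om -> \bar R) :
    [set v | obs_of t (T1 i) (C v) = x i] = [set v | (t%:E <= C v)%E].
  by rewrite -[LHS]/(C @^-1` [set c | obs_of t (T1 i) c = x i]) riskE.
rewrite /cond_weight (risk_event (C1 i)) (risk_event (C0 i)).
have -> : Z i @^-1` [set false] = ~` [set v | Z i v].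
  by apply/seteqP; split=> v /=; case: (Z i v).
by rewrite probability_setC ?PZ ?PC0 ?PC1 //; exact: measurable_Z_event.
Qed.

End NullModel.

Unset Implicit Arguments. Set Strict Implicit. Set Printing Implicit Defensive.

Theorem lemmaA2 (R : realType) (d : measure_display) (Om : measurableType d)
  (P : probability Om R) (n : nat) (p1 : R) (G1 G0 : R -> R)
  (T1 T0 : 'I_n -> R) (Z : 'I_n -> Om -> bool) (C1 C0 : 'I_n -> Om -> \bar R) :
  0 < p1 < 1 ->
  (forall i, 0 <= T1 i) -> (forall i, 0 <= T0 i) ->
  (forall i w, (0 <= C1 i w)%E) -> (forall i w, (0 <= C0 i w)%E) ->
  (forall i, measurable_fun setT (Z i)) ->
  (forall i, measurable_fun setT (C1 i)) ->
  (forall i, measurable_fun setT (C0 i)) ->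
  (* Assumptions 1 and 2: Z_1,...,Z_n and the pairs (C_i(1),C_i(0)) are
     mutually independent, Z_i ~ Bernoulli(p1), pairs identically distributed *)
  (forall i, P [set w | Z i w] = p1%:E) ->
  mutual_indep P (unit_classes Z C1 C0) ->
  (forall i j (B : set (\bar R * \bar R)), measurable B ->
     P (Cpair C1 C0 i @^-1` B) = P (Cpair C1 C0 j @^-1` B)) ->
  (forall i (c : R), P [set w | (c%:E <= C1 i w)%E] = (G1 c)%:E) ->
  (forall i (c : R), P [set w | (c%:E <= C0 i w)%E] = (G0 c)%:E) ->
  (* null hypothesis *)
  (forall i, T1 i = T0 i) ->
  forall (t : R), 0 <= t -> forall (A B : int) (x : {ffun 'I_n -> bool * bool}),
  let Ecnd := [set w | forall i, obs T1 T0 Z C1 C0 t i w = x i] in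
  let Dx := (\sum_(i < n) (x i).1)%N in
  let Nx := (\sum_(i < n) (x i).2)%N in
  (0 < P Ecnd)%E ->
  fine (P ([set w | (D1bar T1 T0 Z C1 C0 t w)%:Z = A /\
                    (N1bar T1 T0 Z C1 C0 t w)%:Z = B] `&` Ecnd)) / fine (P Ecnd)
  = binz Dx A * binz (Nx - Dx) (B - A)
    * (phi p1 G1 G0 t) ^ B * (1 - phi p1 G1 G0 t) ^ (Nx%:Z - B).
Proof.
move=> _ _ _ _ _ mZ mC1 mC0 PZ indep _ PC1 PC0 null t _ A B x Ecnd Dx Nx Ecnd_gt0.
have [w0 Ew0] : Ecnd !=set0.
  by apply/set0P/eqP => Ecnd0; move: Ecnd_gt0; rewrite Ecnd0 measure0 ltxx.
have PE := prob_cond mZ mC1 mC0 indep null t x.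
rewrite prob_joint_cond // PE /=; apply: nested_counts_ratio => [i|i|].
- exact: cond_event_at_risk Ew0.
- exact: cond_weight_at_risk Ew0.
- by apply: lt0r_neq0; rewrite -lte_fin -PE.
Qed.
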